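(* Let $k\ge 3$ and let $n\ge k-1$ be an integer. If $\nu_k(n)=0$, then $n-k+3$ is prime.
   Context: For an integer $k\ge 3$ and a positive integer $n$, $\nu_k(n)$ denotes the number of $k$-tuples of integers $(x_1,\dots,x_k)$ with $1\le x_1\le x_2\le\dots\le x_k$ such that $x_1x_2\cdots x_k+x_1+x_2+\dots+x_k=n$. *)

From mathcomp Require Import all_boot all_order.
Set Implicit Arguments. Unset Strict Implicit. Unset Printing Implicit Defensive.

Definition is_solution (k n : nat) (x : 'I_k -> nat) : bool :=
  [forall i : 'I_k, 1 <= x i] &&
  [forall i : 'I_k, forall j : 'I_k, (i <= j)%N ==> (x i <= x j)] &&
  ((\prod_(i < k) x i) + (\sum_(i < k) x i) == n).

(* nu k n : number of such k-tuples. Every entry of a solution is <= n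
   (since each x_i <= sum x_i <= n), so enumerating tuples with entries
   in {0,...,n} counts all solutions. *)
Definition nu (k n : nat) : nat :=
  #|[set x : {ffun 'I_k -> 'I_n.+1} | @is_solution k n (fun i => nat_of_ord (x i))]|.

From mathcomp Require Import all_boot all_order.
From mathcomp Require Import zify.

Set Implicit Arguments.
Unset Strict Implicit.
Unset Printing Implicit Defensive.

(* A composite n + 3 - k factors as (p + 1)(q + 1) with 1 <= p <= q, and then
   the k-tuple (1, ..., 1, p, q) is a solution: its product plus its sum is
   p q + (k - 2) + p + q = (p + 1)(q + 1) + k - 3 = n. *)

Lemma composite_mulSS m : 1 < m -> ~~ prime m ->
  exists p q, [/\ 0 < p, p <= q & m = p.+1 * q.+1].
Proof.
move=> m_gt1 /primePn[|[d /andP[d_gt1 d_ltm] d_dvd_m]]; first by rewrite ltnNge m_gt1.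
have m_eq : m = m %/ d * d by rewrite divnK.
have cofactor_gt1 : 1 < m %/ d by rewrite ltn_divRL // mul1n.
have [le_de|le_ed] := leqP d (m %/ d).
- exists d.-1, (m %/ d).-1; rewrite !prednK; try lia.
  by split; try lia; rewrite {1}m_eq mulnC.
- exists (m %/ d).-1, d.-1; rewrite !prednK; try lia.
  by split; try lia.
Qed.

Lemma solution_entry_le k n (x : 'I_k -> nat) i : is_solution n x -> x i <= n.
Proof.
by case/andP=> _ /eqP <-; rewrite [X in _ + X](bigD1 i) //= addnCA leq_addr.
Qed.

Lemma eq_is_solution k n (x y : 'I_k -> nat) :
  x =1 y -> is_solution n x = is_solution n y.
Proof.
move=> e; rewrite /is_solution (eq_bigr y (fun i _ => e i)) (eq_bigr y (fun i _ => e i)).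
congr (_ && _ && _); apply: eq_forallb => i; first by rewrite e.
by apply: eq_forallb => j; rewrite !e.
Qed.

Lemma nu_gt0 k n (x : 'I_k -> nat) : is_solution n x -> 0 < nu k n.
Proof.
move=> sol_x; apply/card_gt0P.
exists [ffun i => inord (x i)]; rewrite inE.
rewrite (eq_is_solution n (y := x)) // => i.
by rewrite ffunE inordK // ltnS; exact: solution_entry_le i sol_x.
Qed.

Definition ones_then_pair j (p q : nat) (i : 'I_j.+2) : nat :=
  if i < j then 1 else if i == j :> nat then p else q.
Arguments ones_then_pair : clear implicits.

Lemma prod_ones_then_pair j p q : \prod_(i < j.+2) ones_then_pair j p q i = p * q.
Proof.
rewrite !big_ord_recr /= big1 => [|i _]; last by rewrite /ones_then_pair /= ltn_ord.
by rewrite /ones_then_pair /= ltnn eqxx ltnNge leqnSn (gtn_eqF (ltnSn j)) mul1n.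
Qed.

Lemma sum_ones_then_pair j p q : \sum_(i < j.+2) ones_then_pair j p q i = j + p + q.
Proof.
rewrite !big_ord_recr /= (eq_bigr (fun=> 1)) => [|i _]; last first.
  by rewrite /ones_then_pair /= ltn_ord.
rewrite sum_nat_const card_ord muln1 /ones_then_pair /= ltnn eqxx.
by rewrite ltnNge leqnSn (gtn_eqF (ltnSn j)).
Qed.

Lemma ones_then_pair_solution j p q : 0 < p -> p <= q ->
  is_solution (p * q + (j + p + q)) (ones_then_pair j p q).
Proof.
move=> p_gt0 le_pq.
rewrite /is_solution prod_ones_then_pair sum_ones_then_pair eqxx andbT.
apply/andP; split; apply/forallP => i; rewrite /ones_then_pair.
- by case: ifP => // _; case: ifP => _; lia.
- apply/forallP => i'; apply/implyP => le_ii'; have := ltn_ord i'.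
  case: (ltnP i j) => ?; case: (ltnP i' j) => ?;
  case: (@eqP _ (nat_of_ord i) j) => ?; case: (@eqP _ (nat_of_ord i') j) => ?; lia.
Qed.

Theorem proposition2 (k n : nat) (hk : 3 <= k) (hn : k - 1 <= n) :
  nu k n = 0 -> prime (n + 3 - k).
Proof.
case: k hk hn => [|[|j]] // hk hn nu0.
apply: contraT => not_prime.
have m_gt1 : 1 < n + 3 - j.+2 by lia.
have [p [q [p_gt0 le_pq eq_pq]]] := composite_mulSS m_gt1 not_prime.
have n_eq : n = p * q + (j + p + q).
  by move: eq_pq; rewrite mulSn mulnS; lia.
by move: (nu_gt0 (ones_then_pair_solution j p_gt0 le_pq)); rewrite -n_eq nu0.
Qed.
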